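(* Let $(C,\mathfrak p,\mathfrak d)$ be a regular $q$-cycle coalgebra such that $\mathfrak p_{11}^1=0$, $\mathfrak p=\mathfrak d$, $\mathfrak p_{i0}^1=\delta_{1i}$ for all $i$, and $\mathfrak p_{1j}^1=0$ for all $j>0$. Then $\mathfrak p_{i1}^1=0$ for all $i$.
   Context: $K$ is an algebraically closed field of characteristic $0$ and $n\ge2$. $C$ is the coalgebra dual to $K[y]/\langle y^n\rangle$: basis $x_0,\dots,x_{n-1}$, $\Delta(x_i)=\sum_{j+k=i}x_j\otimes x_k$, $\epsilon(x_i)=\delta_{i0}$; $C\otimes C$ has the tensor product coalgebra structure; Sweedler notation $\Delta(b)=b_{(1)}\otimes b_{(2)}$. For linear maps $\mathfrak p,\mathfrak d\colon C\otimes C\to C$ write $a\cdot b=\mathfrak p(a\otimes b)$, $a:b=\mathfrak d(a\otimes b)$, $\mathfrak p(x_i\otimes x_j)=\sum_{k=0}^{n-1}\mathfrak p_{ij}^kx_k$, $\mathfrak d(x_i\otimes x_j)=\sum_{k=0}^{n-1}\mathfrak d_{ij}^kx_k$ (indices in $\{0,\dots,n-1\}$). A triple $(C,\mathfrak p,\mathfrak d)$ with $\mathfrak p,\mathfrak d$ coalgebra morphisms is a regular $q$-magma coalgebra if there are coalgebra morphisms $a\otimes b\mapsto a^b$, $a\otimes b\mapsto a_b$ from $C\otimes C$ to $C$ with $a^{b_{(1)}}\cdot b_{(2)}=(a\cdot b_{(1)})^{b_{(2)}}=\epsilon(b)a$ and $(a:b_{(2)})_{b_{(1)}}=a_{b_{(2)}}:b_{(1)}=\epsilon(b)a$.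 It is a regular $q$-cycle coalgebra if moreover for all $a,b,c$: (1) $(a\cdot b_{(1)})\cdot(c:b_{(2)})=(a\cdot c_{(2)})\cdot(b\cdot c_{(1)})$; (2) $(a\cdot b_{(1)}):(c\cdot b_{(2)})=(a:c_{(2)})\cdot(b:c_{(1)})$; (3) $(a:b_{(1)}):(c:b_{(2)})=(a:c_{(2)}):(b\cdot c_{(1)})$. *)

From HB Require Import structures.
From mathcomp Require Import all_boot all_order all_algebra.
Set Implicit Arguments. Unset Strict Implicit. Unset Printing Implicit Defensive.
Import GRing.Theory.

(* C = dual coalgebra of K[y]/(y^n), elements are row vectors 'rV[K]_n of
   coordinates on the basis x_0,...,x_{n-1}.
   A linear map C (x) C -> C is given by its structure constants
   f i j k = coefficient of x_k in f(x_i (x) x_j). *)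

Section Coalg.
Variable K : fieldType.
Variable n : nat.
Local Open Scope ring_scope.

Definition sc := 'I_n -> 'I_n -> 'I_n -> K.

Definition xb (i : 'I_n) : 'rV[K]_n := delta_mx 0 i.

Definition bm (f : sc) (u v : 'rV[K]_n) : 'rV[K]_n :=
  \row_k \sum_(i < n) \sum_(j < n) u 0 i * v 0 j * f i j k.

Definition eps (u : 'rV[K]_n) : K := \sum_(k < n | (val k == 0)%N) u 0 k.

(* Sweedler sum: for Delta(b) = b_(1) (x) b_(2), with
   Delta(x_j) = sum_{s+t=j} x_s (x) x_t, this is sum F(b_(1), b_(2)) where F
   is given on basis indices (F s t = F(x_s, x_t)), extended linearly. *)
Definition sw (b : 'rV[K]_n) (F : 'I_n -> 'I_n -> 'rV[K]_n) : 'rV[K]_n :=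
  \sum_(j < n) b 0 j *: \sum_(s < n) \sum_(t < n | (val s + val t == val j)%N) F s t.

(* f : C (x) C -> C is a coalgebra morphism (C (x) C with the tensor product
   coalgebra structure):
   - counit: eps(f(x_i (x) x_j)) = eps(x_i) eps(x_j);
   - comultiplication: Delta(f(x_i (x) x_j)) = sum f(x_a (x) x_c) (x) f(x_b (x) x_d)
     over a+b=i, c+d=j; compared coefficientwise at x_u (x) x_v. *)
Definition is_coalg_morph (f : sc) : Prop :=
  (forall i j k : 'I_n, val k = 0%N ->
      f i j k = ((val i == 0%N) && (val j == 0%N))%:R) /\
  (forall i j u v : 'I_n,
      \sum_(k < n | (val k == val u + val v)%N) f i j k =
      \sum_(a < n) \sum_(b < n | (val a + val b == val i)%N)
        \sum_(c < n) \sum_(d < n | (val c + val d == val j)%N)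
          f a c u * f b d v).

Definition regular_q_magma (p d : sc) : Prop :=
  is_coalg_morph p /\ is_coalg_morph d /\
  exists e h : sc, is_coalg_morph e /\ is_coalg_morph h /\
    forall a b : 'rV[K]_n,
      (* a^{b(1)} . b(2) = eps(b) a *)
      sw b (fun s t => bm p (bm e a (xb s)) (xb t)) = eps b *: a /\
      (* (a . b(1))^{b(2)} = eps(b) a *)
      sw b (fun s t => bm e (bm p a (xb s)) (xb t)) = eps b *: a /\
      (* (a : b(2))_{b(1)} = eps(b) a *)
      sw b (fun s t => bm h (bm d a (xb t)) (xb s)) = eps b *: a /\
      (* a_{b(2)} : b(1) = eps(b) a *)
      sw b (fun s t => bm d (bm h a (xb t)) (xb s)) = eps b *: a.

Definition regular_q_cycle (p d : sc) : Prop :=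
  regular_q_magma p d /\
  forall a b c : 'rV[K]_n,
    (* (1) (a . b(1)) . (c : b(2)) = (a . c(2)) . (b . c(1)) *)
    sw b (fun s t => bm p (bm p a (xb s)) (bm d c (xb t))) =
    sw c (fun s t => bm p (bm p a (xb t)) (bm p b (xb s))) /\
    (* (2) (a . b(1)) : (c . b(2)) = (a : c(2)) . (b : c(1)) *)
    sw b (fun s t => bm d (bm p a (xb s)) (bm p c (xb t))) =
    sw c (fun s t => bm p (bm d a (xb t)) (bm d b (xb s))) /\
    (* (3) (a : b(1)) : (c : b(2)) = (a : c(2)) : (b . c(1)) *)
    sw b (fun s t => bm d (bm d a (xb s)) (bm d c (xb t))) =
    sw c (fun s t => bm d (bm d a (xb t)) (bm p b (xb s))).

End Coalg.

(* Write q_ij^k for the structure constants of p = d.  Comultiplicativity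
   makes q^(k+1) the convolution of q^1 with q^k (dually, the algebra map
   y |-> f = sum q_ij^1 y1^i y2^j sends y^(k+1) to f f^k), and the
   x_1-coordinate of axiom (1) on basis vectors says that
   c(x,y,z) = sum_(s+t=y) q_xs^i q_zt^j q_ij^1 is symmetric in y and z.
   If some q_0r^1 is nonzero, take r least: c(i,0,r) = c(i,r,0) reads
   q_ir^1 = q_ir^1 + q_0r^1 q_i1^1.  Otherwise q_xs^k = 0 for x < k, and if
   q_m1^1 = 0 for all m < M then c(M,M,1) = 0 while c(M,1,M) = (q_M1^1)^2,
   so q_M1^1 = 0 by induction on M. *)

From HB Require Import structures.
From mathcomp Require Import all_boot all_order all_algebra zify.
Set Implicit Arguments. Unset Strict Implicit. Unset Printing Implicit Defensive.
Import GRing.Theory.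
Local Open Scope ring_scope.

Section NatSums.
Variable V : nmodType.

Lemma sumr_nat_eq0 m (F : nat -> V) :
  (forall i, (i < m)%N -> F i = 0) -> \sum_(0 <= i < m) F i = 0.
Proof. by move=> F0; rewrite big_mkord big1 // => i _; apply: F0. Qed.

Lemma sumr_nat_single m (F : nat -> V) a : (a < m)%N ->
  (forall i, (i < m)%N -> i != a -> F i = 0) -> \sum_(0 <= i < m) F i = F a.
Proof.
move=> am F0; rewrite big_mkord (bigD1 (Ordinal am)) //= big1 ?addr0 // => i ia.
by apply: F0; rewrite // -(inj_eq val_inj) in ia.
Qed.

Lemma sumr_nat_pair m (F : nat -> V) a b : (a < m)%N -> (b < m)%N -> a != b ->
  (forall i, (i < m)%N -> i != a -> i != b -> F i = 0) ->
  \sum_(0 <= i < m) F i = F a + F b.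
Proof.
move=> am bm ab F0; rewrite big_mkord (bigD1 (Ordinal am)) //= (bigD1 (Ordinal bm)) /=.
  rewrite big1 ?addr0 // => i /andP[ia ib].
  by apply: F0; rewrite // -(inj_eq val_inj) in ia ib.
by rewrite -(inj_eq val_inj) eq_sym.
Qed.

Lemma sumr_conv n (G : nat -> nat -> V) i : (i < n)%N ->
  \sum_(a < n) \sum_(b < n | (a + b == i)%N) G a b = \sum_(0 <= a < i.+1) G a (i - a)%N.
Proof.
move=> i_lt_n; rewrite big_mkord (big_ord_widen n (fun a => G a (i - a)%N) i_lt_n).
rewrite [RHS]big_mkcond; apply: eq_bigr => a _; rewrite ltnS; case: leqP => [a_le_i | i_lt_a].
  rewrite (eq_bigl (fun b : 'I_n => val b == (i - a)%N)).
    by rewrite big_ord1_eq (leq_ltn_trans (leq_subr a i)).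
  by move=> b /=; apply/eqP/eqP; lia.
by rewrite big1 // => b /eqP ab; move: i_lt_a; rewrite -ab ltnNge leq_addr.
Qed.

Lemma sumr_conv_swap n (G : nat -> nat -> V) i : (i < n)%N ->
  \sum_(a < n) \sum_(b < n | (a + b == i)%N) G a b = \sum_(0 <= b < i.+1) G (i - b)%N b.
Proof.
move=> i_lt_n; rewrite (exchange_big_dep xpredT) //= -(sumr_conv (fun b a => G a b) i_lt_n).
by apply: eq_bigr => b _; apply: eq_bigl => a; rewrite addnC.
Qed.

End NatSums.

(* The x_k-coordinate of (x_x . x_y(1)) . (x_z : x_y(2)) when q and r are the
   structure constants of . and : respectively. *)
Definition cycle_lhs_coef (R : pzSemiRingType) n (q r : nat -> nat -> nat -> R)
    (k x y z : nat) : R :=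
  \sum_(0 <= s < y.+1) \sum_(0 <= i < n) \sum_(0 <= j < n) q x s i * r z (y - s)%N j * q i j k.

Section StructureConstants.
Variables (K : idomainType) (n : nat) (q : nat -> nat -> nat -> K).
Hypothesis n_gt1 : (1 < n)%N.
Hypothesis q_counit : forall a b, (a < n)%N -> (b < n)%N ->
  q a b 0 = ((a == 0%N) && (b == 0%N))%:R.
Hypothesis q_comul : forall k i j, (k.+1 < n)%N -> (i < n)%N -> (j < n)%N ->
  q i j k.+1 = \sum_(0 <= a < i.+1) \sum_(0 <= c < j.+1) q a c 1 * q (i - a) (j - c) k.
Hypothesis q_cycle : forall x y z, (x < n)%N -> (y < n)%N -> (z < n)%N ->
  cycle_lhs_coef n q q 1 x y z = cycle_lhs_coef n q q 1 x z y.
Hypothesis q_a01 : forall a, (a < n)%N -> q a 0 1 = (a == 1%N)%:R.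
Hypothesis q_1j1 : forall j, (0 < j < n)%N -> q 1 j 1 = 0.

Let n_gt0 : (0 < n)%N := ltnW n_gt1.

Lemma q_right_unit k x : (k < n)%N -> (x < n)%N -> q x 0 k = (x == k)%:R.
Proof.
elim: k x => [|k IHk] x kn xn; first by rewrite q_counit // andbT.
rewrite q_comul //; under eq_bigr => a _ do rewrite big_nat1 subn0.
case: x xn => [|x] xn; first by rewrite big_nat1 q_a01 ?mul0r.
rewrite (sumr_nat_single (a := 1%N)) // => [|a ax a1]; last first.
  by rewrite q_a01 ?(negbTE a1) ?mul0r //; lia.
by rewrite q_a01 // mul1r subSS subn0 IHk ?eqSS //; lia.
Qed.

Lemma cycle_lhs_coef_y0 x z : (x < n)%N -> (z < n)%N ->
  cycle_lhs_coef n q q 1 x 0 z = q x z 1.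
Proof.
move=> xn zn; rewrite /cycle_lhs_coef big_nat1 subn0 (sumr_nat_single xn) => [|i iN ix].
  rewrite (sumr_nat_single zn) => [|j jn jz]; first by rewrite !q_right_unit // !eqxx !mul1r.
  by rewrite [q z _ j]q_right_unit // eq_sym (negbTE jz) mulr0 mul0r.
by apply: sumr_nat_eq0 => j jn; rewrite q_right_unit // eq_sym (negbTE ix) !mul0r.
Qed.

Section FirstNonzeroLeftCoefficient.
Variable r : nat.
Hypotheses (r_lt_n : (r < n)%N) (q0r1_neq0 : q 0 r 1 != 0).
Hypothesis q0s1_low : forall s, (s < r)%N -> q 0 s 1 = 0.

Lemma q0_eq0_below j s : (0 < j < n)%N -> (s < n)%N -> (s < r * j)%N -> q 0 s j = 0.
Proof.
elim: j s => [//|j IHj] s /andP[_ jn] sn srj.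
case: j IHj jn srj => [|j] IHj jn srj; first by apply: q0s1_low; rewrite muln1 in srj.
rewrite q_comul // big_nat1 subn0; apply: sumr_nat_eq0 => c cs.
have [cr | rc] := ltnP c r; first by rewrite q0s1_low // mul0r.
by rewrite IHj ?mulr0 //; move: srj; rewrite mulnS; lia.
Qed.

Let r_gt0 : (0 < r)%N.
Proof. by move: q0r1_neq0; case: r => //; rewrite q_a01 // mulr0n eqxx. Qed.

Lemma q0_eq0_between s j : (0 < s < r)%N -> (j < n)%N -> q 0 s j = 0.
Proof.
move=> /andP[s_gt0 sr] jn; case: j jn => [|j] jn; first by rewrite q_counit ?eqn0Ngt ?s_gt0 //; lia.
by rewrite q0_eq0_below //; nia.
Qed.

Lemma q0r_eq0 j : (j < n)%N -> j != 1%N -> q 0 r j = 0.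
Proof.
case: j => [|[//|j]] jn _; first by rewrite q_counit ?eqn0Ngt ?r_gt0.
by rewrite q0_eq0_below //; nia.
Qed.

Lemma q_i11_eq0_of_first_nonzero i : (i < n)%N -> q i 1 1 = 0.
Proof.
move=> iN; have cyc_ir0 : cycle_lhs_coef n q q 1 i r 0 = q 0 r 1 * q i 1 1 + q i r 1.
  rewrite /cycle_lhs_coef (sumr_nat_pair (a := 0) (b := r)) ?(ltn_eqF r_gt0) //
    => [|s sr s0 srr]; last first.
    apply: sumr_nat_eq0 => i' i'n; apply: sumr_nat_eq0 => j jn.
    by rewrite q0_eq0_between ?mulr0 ?mul0r //; lia.
  rewrite subn0 subnn (sumr_nat_single iN) => [|i' i'n i'i]; last first.
    by apply: sumr_nat_eq0 => j jn; rewrite q_right_unit // eq_sym (negbTE i'i) !mul0r.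
  rewrite (sumr_nat_single (a := 1%N)) => [|//|j jn j1]; last by rewrite q0r_eq0 ?mulr0 ?mul0r.
  rewrite (sumr_nat_single (a := 1%N)) => [|//|i' i'n i'1]; last first.
    rewrite (sumr_nat_single n_gt0) => [|j jn j0]; last first.
      by rewrite q_right_unit // eq_sym (negbTE j0) mulr0 mul0r.
    by rewrite q_right_unit // q_a01 // (negbTE i'1) mulr0.
  rewrite (sumr_nat_single n_gt0) => [|j jn j0]; last first.
    by rewrite q_right_unit // eq_sym (negbTE j0) mulr0 mul0r.
  by rewrite !q_right_unit // !eqxx !mulr1 mul1r.
move: (q_cycle iN n_gt0 r_lt_n).
rewrite cycle_lhs_coef_y0 // cyc_ir0 -[LHS]add0r => /addIr/esym/eqP.
by rewrite mulf_eq0 (negbTE q0r1_neq0) => /eqP.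
Qed.

End FirstNonzeroLeftCoefficient.

Section VanishingLeftCoefficients.
Hypothesis q0s1_eq0 : forall s, (s < n)%N -> q 0 s 1 = 0.

Lemma q_eq0_below_deg k x s : (0 < k < n)%N -> (x < n)%N -> (s < n)%N -> (x < k)%N ->
  q x s k = 0.
Proof.
elim: k x s => [//|k IHk] x s /andP[_ kn] xn sn xk.
case: k IHk kn xk => [|k] IHk kn xk; first by rewrite (_ : x = 0%N) ?q0s1_eq0 //; lia.
rewrite q_comul //; apply: sumr_nat_eq0 => a ax; apply: sumr_nat_eq0 => c cs.
case: a ax => [|a] ax; first by rewrite q0s1_eq0 ?mul0r //; lia.
by rewrite IHk ?mulr0 //; lia.
Qed.

Lemma q_diag k j : (k < n)%N -> (j < n)%N -> q k j k = (j == 0%N)%:R.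
Proof.
elim: k => [|k IHk] kn jn; first by rewrite q_counit.
rewrite q_comul // (sumr_nat_single (a := 1%N)) // => [|a ak a1]; last first.
  apply: sumr_nat_eq0 => c cj.
  case: a ak a1 => [|[|a]] ak a1 //; first by rewrite q0s1_eq0 ?mul0r //; lia.
  by rewrite [q (_ - _)%N _ _]q_eq0_below_deg ?mulr0 //; lia.
rewrite (sumr_nat_single (a := 0%N)) // => [|c cj c0]; last first.
  by rewrite q_1j1 ?mul0r //; lia.
by rewrite q_a01 // mul1r subSS !subn0 IHk //; lia.
Qed.

Lemma q1_eq0 t j : (0 < t < n)%N -> (j < n)%N -> q 1 t j = 0.
Proof.
move=> /andP[t_gt0 tn]; case: j => [|[|j]] jn; first by rewrite q_counit.
  by rewrite q_1j1 ?t_gt0.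
by rewrite q_eq0_below_deg.
Qed.

Section MinimalNonzero.
Variable M : nat.
Hypothesis qm11_low : forall m, (m < M)%N -> q m 1 1 = 0.

Lemma q_m1k_eq0 k m : (0 < k < n)%N -> (m < n)%N -> (m.+1 < M + k)%N -> q m 1 k = 0.
Proof.
elim: k m => [//|k IHk] m /andP[_ kn] mn mMk.
case: k IHk kn mMk => [|k] IHk kn mMk; first by apply: qm11_low; lia.
rewrite q_comul //; apply: sumr_nat_eq0 => a am.
rewrite big_nat_recr //= big_nat1 subn0 subnn [q (m - a)%N 0 _]q_right_unit; try lia.
have -> : q a 1 1 * ((m - a)%N == k.+1)%:R = 0.
  by case: eqP => [mak|_]; rewrite ?mulr0 // qm11_low ?mul0r //; lia.
rewrite addr0 q_a01; last by lia.
by case: eqP am => [-> am|_ _]; rewrite ?mul0r // mul1r IHk ?(ltnW kn) //; lia.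
Qed.

Lemma q_M11_eq0 : (M < n)%N -> q M 1 1 = 0.
Proof.
move=> Mn; have [->|M_gt0] := posnP M; first exact: q0s1_eq0.
have lhs0 : cycle_lhs_coef n q q 1 M M 1 = 0.
  rewrite /cycle_lhs_coef big_nat_recr //= subnn sumr_nat_eq0 => [|s sM]; last first.
    apply: sumr_nat_eq0 => i iN; apply: sumr_nat_eq0 => j jn.
    by rewrite q1_eq0 ?mulr0 ?mul0r //; lia.
  rewrite add0r sumr_nat_eq0 // => i iN.
  rewrite (sumr_nat_single n_gt1) => [|j jn j1]; last first.
    by rewrite q_right_unit // eq_sym (negbTE j1) mulr0 mul0r.
  rewrite q_right_unit // mulr1; have [iM|Mi|->] := ltngtP i M.
  - by rewrite qm11_low ?mulr0.
  - by rewrite q_eq0_below_deg ?mul0r //; lia.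
  - by rewrite q_diag // (gtn_eqF M_gt0) mul0r.
have rhs_sq : cycle_lhs_coef n q q 1 M 1 M = q M 1 1 * q M 1 1.
  rewrite /cycle_lhs_coef big_nat_recr //= big_nat1 !subn0 subnn.
  rewrite (sumr_nat_single Mn) => [|i iN iM]; last first.
    by apply: sumr_nat_eq0 => j jn; rewrite q_right_unit // eq_sym (negbTE iM) !mul0r.
  rewrite (sumr_nat_single n_gt1) => [|j jn j1]; last first.
    case: j jn j1 => [|[|j]] jn j1 //; first by rewrite q_counit // andbF mulr0 mul0r.
    by rewrite q_m1k_eq0 ?mulr0 ?mul0r //; lia.
  rewrite sumr_nat_eq0 ?addr0 => [|i iN]; first by rewrite q_right_unit // eqxx mul1r.
  rewrite (sumr_nat_single Mn) => [|j jn jM]; last first.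
    by rewrite q_right_unit // eq_sym (negbTE jM) mulr0 mul0r.
  case: i iN => [|[|i]] iN; first by rewrite q0s1_eq0 ?mulr0.
    by rewrite q_1j1 ?M_gt0 ?mulr0.
  by rewrite q_m1k_eq0 ?mul0r //; lia.
move: (q_cycle Mn Mn n_gt1); rewrite lhs0 rhs_sq => /esym/eqP.
by rewrite mulf_eq0 orbb => /eqP.
Qed.

End MinimalNonzero.

End VanishingLeftCoefficients.

Lemma q_i11_eq0 i : (i < n)%N -> q i 1 1 = 0.
Proof.
have [/existsP[s0 qs0] | /existsPn q0s1_neq0] := boolP [exists s : 'I_n, q 0 s 1 != 0].
  have /ex_minnP[r /andP[rn qr] r_min] : exists r, (r < n)%N && (q 0 r 1 != 0).
    by exists s0; rewrite ltn_ord qs0.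
  apply: (q_i11_eq0_of_first_nonzero rn qr) => s sr; apply/eqP; apply: contraTT (sr) => qs.
  by rewrite -leqNgt r_min // qs andbT; lia.
have q0s1_eq0 s : (s < n)%N -> q 0 s 1 = 0.
  by move=> sn; apply/eqP; move: (q0s1_neq0 (Ordinal sn)); rewrite negbK.
elim/ltn_ind: i => i IHi iN; apply: q_M11_eq0 => // m mi.
by apply: IHi; rewrite // (ltn_trans mi).
Qed.

End StructureConstants.

Section NatIndexing.
Variables (K : fieldType) (n : nat).

(* Junk value 0 outside 'I_n. *)
Definition sc_nat (f : sc K n) (a b k : nat) : K :=
  match (insub a : option 'I_n), (insub b : option 'I_n), (insub k : option 'I_n) with
  | Some a', Some b', Some k' => f a' b' k'
  | _, _, _ => 0
  end.

Lemma sc_natE (f : sc K n) (a b k : 'I_n) : sc_nat f a b k = f a b k.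
Proof. by rewrite /sc_nat !valK. Qed.

Lemma sc_nat_ord (f : sc K n) a b k (an : (a < n)%N) (bn : (b < n)%N) (kn : (k < n)%N) :
  sc_nat f a b k = f (Ordinal an) (Ordinal bn) (Ordinal kn).
Proof. exact: (sc_natE f (Ordinal an) (Ordinal bn) (Ordinal kn)). Qed.

Lemma bm_xb (f : sc K n) a b k : bm f (xb K a) (xb K b) 0 k = f a b k.
Proof.
rewrite mxE (bigD1 a) //= [X in _ + X]big1 ?addr0 => [|i /negbTE ia]; last first.
  by rewrite big1 // => j _; rewrite !mxE ia /= !mul0r.
rewrite (bigD1 b) //= [X in _ + X]big1 ?addr0 => [|j /negbTE jb]; last first.
  by rewrite !mxE jb /= mulr0 mul0r.
by rewrite !mxE !eqxx !mul1r.
Qed.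

Lemma sw_xb F (b k : 'I_n) :
  sw (xb K b) F 0 k = \sum_(s < n) \sum_(t < n | (s + t == b)%N) F s t 0 k.
Proof.
rewrite /sw (bigD1 b) //= [X in _ + X]big1 ?addr0 => [|j /negbTE jb]; last first.
  by rewrite mxE jb /= scale0r.
rewrite !mxE !eqxx mul1r summxE; apply: eq_bigr => s _; exact: summxE.
Qed.

Lemma coalg_morph_counit_nat f : is_coalg_morph f ->
  forall a b, (a < n)%N -> (b < n)%N -> sc_nat f a b 0 = ((a == 0%N) && (b == 0%N))%:R.
Proof.
move=> [f_eps _] a b an bn.
by rewrite (sc_nat_ord _ an bn (leq_ltn_trans (leq0n a) an)) f_eps.
Qed.

Lemma coalg_morph_comul_nat f : is_coalg_morph f ->
  forall k i j, (k.+1 < n)%N -> (i < n)%N -> (j < n)%N ->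
  sc_nat f i j k.+1 =
    \sum_(0 <= a < i.+1) \sum_(0 <= c < j.+1) sc_nat f a c 1 * sc_nat f (i - a) (j - c) k.
Proof.
move=> [_ f_delta] k i j kn ni jn.
have n_gt1 : (1 < n)%N := leq_ltn_trans (ltn0Sn k) kn.
have := f_delta (Ordinal ni) (Ordinal jn) (Ordinal n_gt1) (Ordinal (ltnW kn)) => /=.
under eq_bigr => k' _ do rewrite -sc_natE.
rewrite big_ord1_eq kn => ->.
under eq_bigr => a _ do under eq_bigr => b _ do
  under eq_bigr => c _ do under eq_bigr => d _ do rewrite -!sc_natE.
rewrite /= (sumr_conv (fun a b => \sum_(c < n) \sum_(d < n | (c + d == j)%N)
  sc_nat f a c 1 * sc_nat f b d k)) //.
by apply: eq_bigr => a _; rewrite (sumr_conv (fun c d => sc_nat f a c 1 * sc_nat f (i - a) d k)).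
Qed.

Lemma bm_bm_xb (f g h : sc K n) a s c t k :
  bm f (bm g (xb K a) (xb K s)) (bm h (xb K c) (xb K t)) 0 k =
  \sum_(0 <= i < n) \sum_(0 <= j < n) sc_nat g a s i * sc_nat h c t j * sc_nat f i j k.
Proof.
rewrite mxE big_mkord; apply: eq_bigr => i _; rewrite big_mkord; apply: eq_bigr => j _.
by rewrite !bm_xb !sc_natE.
Qed.

Lemma regular_q_cycle_coefE p d : regular_q_cycle p d ->
  forall k x y z, (k < n)%N -> (x < n)%N -> (y < n)%N -> (z < n)%N ->
  cycle_lhs_coef n (sc_nat p) (sc_nat d) k x y z =
  cycle_lhs_coef n (sc_nat p) (sc_nat p) k x z y.
Proof.
move=> [_ p_d_cycle] k x y z kn xn yn zn.
have [E _] := p_d_cycle (xb K (Ordinal xn)) (xb K (Ordinal yn)) (xb K (Ordinal zn)).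
move/(congr1 (fun u : 'rV_n => u 0 (Ordinal kn))): E; rewrite !sw_xb /=.
under eq_bigr => s _ do under eq_bigr => t _ do rewrite bm_bm_xb.
under [RHS]eq_bigr => s _ do under eq_bigr => t _ do rewrite bm_bm_xb.
rewrite (sumr_conv (fun s t => \sum_(0 <= i < n) \sum_(0 <= j < n)
  sc_nat p x s i * sc_nat d z t j * sc_nat p i j k)) //.
by rewrite (sumr_conv_swap (fun s t => \sum_(0 <= i < n) \sum_(0 <= j < n)
  sc_nat p x t i * sc_nat p y s j * sc_nat p i j k)).
Qed.

End NatIndexing.

Theorem proposition7p1 (K : closedFieldType) (hK : [pchar K] =i pred0)
  (n : nat) (hn : (2 <= n)%N) (p d : sc K n) :
  regular_q_cycle p d ->
  (forall one : 'I_n, val one = 1%N -> p one one one = 0) ->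
  p = d ->
  (forall i zero one : 'I_n, val zero = 0%N -> val one = 1%N ->
     p i zero one = (val i == 1%N)%:R) ->
  (forall j one : 'I_n, val one = 1%N -> (0 < val j)%N -> p one j one = 0) ->
  forall i one : 'I_n, val one = 1%N -> p i one one = 0.
Proof.
(* p_111 = 0 is the case j = 1 of the last hypothesis. *)
move=> p_cycle _ pd; subst d => p_a01 p_1j1 i one one1.
have [[p_morph _] _] := p_cycle.
have n_gt0 : (0 < n)%N := ltnW hn.
rewrite -(sc_natE p) one1.
apply: (q_i11_eq0 hn (coalg_morph_counit_nat p_morph) (coalg_morph_comul_nat p_morph)) => //.
- by move=> x y z xn yn zn; apply: regular_q_cycle_coefE.
- by move=> a an; rewrite (sc_nat_ord p an n_gt0 hn) p_a01.
- by move=> j /andP[j_gt0 jn]; rewrite (sc_nat_ord p hn jn hn) p_1j1.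
Qed.
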